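(* Let $\gamma_1>0$. For every time step $t\ge1$, the first difference $\Delta L_2(t):=L_2(t+1)-L_2(t)$ of $$L_2(t)=\frac{1}{l_a\gamma_1}\operatorname{tr}\!\left[\big(\tilde w_a^{(2)}(t)\big)^T\tilde w_a^{(2)}(t)\right]$$ satisfies $$\Delta L_2(t)\le\frac1{\gamma_1}\Big(-\big(1-l_a\|\phi_a(t)\|^2\|\hat w_c^{(2)}(t)C(t)\|^2\big)\|\hat w_c^{(2)}(t)\phi_c(t)\|^2+4\|\zeta_c(t)\|^2+4\|w_c^{*(2)}\phi_c(t)\|^2+\|\hat w_c^{(2)}(t)C(t)\zeta_a(t)\|^2\Big),$$ where $\zeta_c(t)=\tilde w_c^{(2)}(t)\phi_c(t)$ and $\zeta_a(t)=\tilde w_a^{(2)}(t)\phi_a(t)\in\mathbb R^n$.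
   Context: Setting (action-dependent heuristic dynamic programming with two one-hidden-layer networks). Fix integers $m,n,N_a,N_c\ge1$, a discount factor $\alpha\in(0,1]$ and learning rates $l_c,l_a>0$. Let $\psi(s)=\frac{1-e^{-s}}{1+e^{-s}}$, applied componentwise to vectors (note $\psi'(s)=\tfrac12(1-\psi(s)^2)$). At each integer time $t$ there are a state $x(t)\in\mathbb R^m$ and a scalar reward $r(t)$. Action network: weights $\hat w_a^{(1)}(t)\in\mathbb R^{N_a\times m}$, $\hat w_a^{(2)}(t)\in\mathbb R^{n\times N_a}$; hidden output $\phi_a(t)=\psi(\hat w_a^{(1)}(t)x(t))\in\mathbb R^{N_a}$; control $u(t)=\hat w_a^{(2)}(t)\phi_a(t)\in\mathbb R^n$. Critic network: weights $\hat w_c^{(1)}(t)\in\mathbb R^{N_c\times(m+n)}$, $\hat w_c^{(2)}(t)\in\mathbb R^{1\times N_c}$ (a row vector); input $y(t)=(x(t)^T,u(t)^T)^T\in\mathbb R^{m+n}$; hidden output $\phi_c(t)=\psi(\hat w_c^{(1)}(t)y(t))\in\mathbb R^{N_c}$; output $\hat J(t)=\hat w_c^{(2)}(t)\phi_c(t)$. Critic error $e_c(t)=\alpha\hat J(t)+r(t)-\hat J(t-1)$. Auxiliary quantities: $C(t)\in\mathbb R^{N_c\times n}$ with $C_{ij}(t)=\tfrac12(1-\phi_{c_i}(t)^2)\,(\hat w_c^{(1)}(t))_{i,m+j}$; $a(t)\in\mathbb R^{N_c}$ with $a_i(t)=\tfrac12(1-\phi_{c_i}(t)^2)(\hat w_c^{(2)}(t))_i$;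 $D(t)\in\mathbb R^{N_a\times n}$ with $D_{ij}(t)=\tfrac12(1-\phi_{a_i}(t)^2)(\hat w_a^{(2)}(t))_{ji}$. The weights are updated by gradient descent: $\hat w_c^{(2)}(t+1)=\hat w_c^{(2)}(t)-l_c\alpha e_c(t)\phi_c(t)^T$, $\hat w_c^{(1)}(t+1)=\hat w_c^{(1)}(t)-l_c\alpha e_c(t)\,a(t)y(t)^T$, $\hat w_a^{(2)}(t+1)=\hat w_a^{(2)}(t)-l_a\hat J(t)\,(\hat w_c^{(2)}(t)C(t))^T\phi_a(t)^T$, $\hat w_a^{(1)}(t+1)=\hat w_a^{(1)}(t)-l_a\hat J(t)\,(\hat w_c^{(2)}(t)C(t)D(t)^T)^T x(t)^T$. Fixed (time-independent) ''optimal'' weights $w_c^{*(1)},w_c^{*(2)},w_a^{*(1)},w_a^{*(2)}$ of the same shapes are given, and the estimation errors are $\tilde w_\bullet(t)=\hat w_\bullet(t)-w_\bullet^{*}$. Assumption 1: $\|w_a^*\|\le w_a^{\max}$ and $\|w_c^*\|\le w_c^{\max}$. Norms are Euclidean for vectors and Frobenius for matrices. *)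

From HB Require Import structures.
From mathcomp Require Import all_boot.
From Stdlib Require Import Reals.
Set Implicit Arguments. Unset Strict Implicit. Unset Printing Implicit Defensive.
Open Scope R_scope.

Lemma Rplus_assoc_ssr : associative Rplus.
Proof. by move=> a b c; rewrite Rplus_assoc. Qed.
HB.instance Definition _ := Monoid.isComLaw.Build R 0%R Rplus Rplus_assoc_ssr Rplus_comm Rplus_0_l.

Definition rsum (k : nat) (F : 'I_k -> R) : R := \big[Rplus/0%R]_(i < k) F i.

Definition vec (k : nat) := 'I_k -> R.
Definition mat (p q : nat) := 'I_p -> 'I_q -> R.

Definition mv p q (A : mat p q) (v : vec q) : vec p := fun i => rsum (fun j => A i j * v j).
Definition trmat p q (A : mat p q) : mat q p := fun j i => A i j.
Definition mmul p q s (A : mat p q) (B : mat q s) : mat p s :=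
  fun i k => rsum (fun j => A i j * B j k).
Definition mtrace p (A : mat p p) : R := rsum (fun i => A i i).
Definition msub p q (A B : mat p q) : mat p q := fun i j => A i j - B i j.
Definition vsub k (u v : vec k) : vec k := fun i => u i - v i.
Definition vnorm k (v : vec k) : R := sqrt (rsum (fun i => v i ^ 2)).
(* row vector (1 x k, represented as vec k) times column vector: a scalar *)
Definition rowdot k (w v : vec k) : R := rsum (fun i => w i * v i).
Definition rowmat p q (w : vec p) (A : mat p q) : vec q := fun j => rsum (fun i => w i * A i j).

Definition psi (s : R) : R := (1 - exp (- s)) / (1 + exp (- s)).
Definition vpsi k (v : vec k) : vec k := fun i => psi (v i).

(* A trajectory of the ADHDP scheme: states, rewards, estimated weights.
   The critic output layer w_c^(2) (1 x N_c row vector) is stored as vec Nc. *)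
Record traj (m n Na Nc : nat) := Traj {
  xs  : nat -> vec m;
  rs  : nat -> R;
  wc1 : nat -> mat Nc (m + n);
  wc2 : nat -> vec Nc;
  wa1 : nat -> mat Na m;
  wa2 : nat -> mat n Na
}.

Section Signals.
Variables (m n Na Nc : nat) (S : traj m n Na Nc).

Definition phia (t : nat) : vec Na := vpsi (mv (wa1 S t) (xs S t)).
Definition uu (t : nat) : vec n := mv (wa2 S t) (phia t).
Definition yy (t : nat) : vec (m + n) :=
  fun k => match fintype.split k with inl i => xs S t i | inr j => uu t j end.
Definition phic (t : nat) : vec Nc := vpsi (mv (wc1 S t) (yy t)).
Definition Jhat (t : nat) : R := rowdot (wc2 S t) (phic t).
Definition ec (alpha : R) (t : nat) : R := alpha * Jhat t + rs S t - Jhat (t - 1).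
Definition Cm (t : nat) : mat Nc n :=
  fun i j => / 2 * (1 - phic t i ^ 2) * wc1 S t i (rshift m j).
Definition av (t : nat) : vec Nc := fun i => / 2 * (1 - phic t i ^ 2) * wc2 S t i.
Definition Dm (t : nat) : mat Na n := fun i j => / 2 * (1 - phia t i ^ 2) * wa2 S t j i.
Definition gC (t : nat) : vec n := rowmat (wc2 S t) (Cm t).
Definition gCD (t : nat) : vec Na := rowmat (gC t) (trmat (Dm t)).

Definition updates (alpha lc la : R) (t : nat) : Prop :=
  (forall i, wc2 S (t.+1) i = wc2 S t i - lc * alpha * ec alpha t * phic t i) /\
  (forall i k, wc1 S (t.+1) i k = wc1 S t i k - lc * alpha * ec alpha t * (av t i * yy t k)) /\
  (forall j i, wa2 S (t.+1) j i = wa2 S t j i - la * Jhat t * (gC t j * phia t i)) /\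
  (forall i k, wa1 S (t.+1) i k = wa1 S t i k - la * Jhat t * (gCD t i * xs S t k)).

End Signals.

From HB Require Import structures.
From mathcomp Require Import all_boot.
From Stdlib Require Import Reals Lra Psatz.
Open Scope R_scope.

(* Since the optimal
   weights are constant, the update law for w_a^(2) moves the estimation
   error by a rank-one matrix:
     W(t+1) = W(t) - l_a J(t) g(t) phi_a(t)^T,   g(t) = w_c^(2)(t) C(t).
   Expanding the Frobenius norm tr(W^T W) of a rank-one perturbation gives
     Delta L_2 = (1/gamma_1) (-2 J z + l_a J^2 |g|^2 |phi_a|^2),
   with z = g zeta_a.  Writing J = zeta_c + w_c^*(2) phi_c, the elementary
   bound -2 (a+b) z <= -(a+b)^2 + 4a^2 + 4b^2 + z^2 finishes the proof. *)

Lemma rsum_ext k (F G : 'I_k -> R) : (forall i, F i = G i) -> rsum F = rsum G.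
Proof. by move=> eqFG; apply: eq_bigr => i _. Qed.

Lemma rsum_add k (F G : 'I_k -> R) : rsum (fun i => F i + G i) = rsum F + rsum G.
Proof. by rewrite /rsum big_split. Qed.

Lemma rsum_scal k c (F : 'I_k -> R) : rsum (fun i => c * F i) = c * rsum F.
Proof. by rewrite /rsum; elim/big_rec2: _ => [|i y1 y2 _ ->]; ring. Qed.

Lemma rsum_ge0 k (F : 'I_k -> R) : (forall i, 0 <= F i) -> 0 <= rsum F.
Proof.
move=> F_ge0; rewrite /rsum; elim/big_rec: _ => [|i y _ y_ge0]; first lra.
by have := F_ge0 i; lra.
Qed.

Lemma rsum_swap p q (F : 'I_p -> 'I_q -> R) :
  rsum (fun i => rsum (fun j => F i j)) = rsum (fun j => rsum (fun i => F i j)).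
Proof. by rewrite /rsum exchange_big. Qed.

Lemma vnorm_sqr k (v : vec k) : vnorm v ^ 2 = rsum (fun i => v i ^ 2).
Proof.
rewrite /vnorm /= Rmult_1_r sqrt_sqrt //.
by apply: rsum_ge0 => i; apply: pow2_ge_0.
Qed.

Lemma rowdot_vsub k (w w' v : vec k) :
  rowdot (vsub w w') v = rowdot w v - rowdot w' v.
Proof.
rewrite /rowdot; suff -> : rsum (fun i => w i * v i) =
    rsum (fun i => vsub w w' i * v i) + rsum (fun i => w' i * v i) by ring.
by rewrite -rsum_add; apply: rsum_ext => i; rewrite /vsub; ring.
Qed.

Lemma trace_gram_rank_one p q (A B : mat p q) (c : R) (u : vec p) (v : vec q) :
  (forall j i, B j i = A j i - c * (u j * v i)) ->
  mtrace (mmul (trmat B) B) =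
    mtrace (mmul (trmat A) A) - 2 * c * rowdot u (mv A v)
    + c ^ 2 * (vnorm u ^ 2 * vnorm v ^ 2).
Proof.
move=> defB; rewrite !vnorm_sqr /mtrace /mmul /trmat.
have entrywise i : rsum (fun j => B j i * B j i) =
    rsum (fun j => A j i * A j i) + (-2 * c) * rsum (fun j => u j * A j i * v i)
    + c ^ 2 * rsum (fun j => v i ^ 2 * u j ^ 2).
  rewrite -!rsum_scal -!rsum_add; apply: rsum_ext => j; rewrite defB; ring.
have cross : rsum (fun i => rsum (fun j => u j * A j i * v i)) = rowdot u (mv A v).
  rewrite rsum_swap /rowdot /mv; apply: rsum_ext => j.
  by rewrite -rsum_scal; apply: rsum_ext => i; ring.
have norms : rsum (fun i => rsum (fun j => v i ^ 2 * u j ^ 2)) =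
    rsum (fun j => u j ^ 2) * rsum (fun i => v i ^ 2).
  rewrite -rsum_scal; apply: rsum_ext => i.
  by rewrite Rmult_comm -rsum_scal.
rewrite (@rsum_ext _ _ _ entrywise) !rsum_add !rsum_scal cross norms; ring.
Qed.

Lemma cross_term_bound a b z :
  - 2 * (a + b) * z <= - (a + b) ^ 2 + 4 * a ^ 2 + 4 * b ^ 2 + z ^ 2.
Proof. have := pow2_ge_0 (a + b + z); have := pow2_ge_0 (a - b); nra. Qed.

Theorem lemma2 (m n Na Nc : nat) (alpha lc la gamma1 : R)
  (S : traj m n Na Nc)
  (wc1s : mat Nc (m + n)) (wc2s : vec Nc) (wa1s : mat Na m) (wa2s : mat n Na) :
  (1 <= m)%nat -> (1 <= n)%nat -> (1 <= Na)%nat -> (1 <= Nc)%nat ->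
  0 < alpha -> alpha <= 1 -> 0 < lc -> 0 < la -> 0 < gamma1 ->
  (forall t, (1 <= t)%nat -> updates S alpha lc la t) ->
  let wa2t := fun t => msub (wa2 S t) wa2s in
  let wc2t := fun t => vsub (wc2 S t) wc2s in
  let L2 := fun t => / (la * gamma1) * mtrace (mmul (trmat (wa2t t)) (wa2t t)) in
  forall t, (1 <= t)%nat ->
    let zeta_c := rowdot (wc2t t) (phic S t) in
    let zeta_a := mv (wa2t t) (phia S t) in
    L2 (t.+1) - L2 t <=
      / gamma1 *
      ( - (1 - la * vnorm (phia S t) ^ 2 * vnorm (gC S t) ^ 2)
            * Rabs (rowdot (wc2 S t) (phic S t)) ^ 2
        + 4 * Rabs zeta_c ^ 2
        + 4 * Rabs (rowdot wc2s (phic S t)) ^ 2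
        + Rabs (rowdot (gC S t) zeta_a) ^ 2 ).
Proof.
move=> _ _ _ _ _ _ _ la_gt0 gamma1_gt0 upd wa2t wc2t L2 t t_ge1 zeta_c zeta_a.
have [_ [_ [upd_wa2 _]]] := upd t t_ge1.
set J := rowdot (wc2 S t) (phic S t).
set s := rowdot wc2s (phic S t).
have J_split : J = zeta_c + s by rewrite /zeta_c /wc2t rowdot_vsub -/J -/s; ring.
have rank_one j i :
    wa2t t.+1 j i = wa2t t j i - la * J * (gC S t j * phia S t i).
  by rewrite /wa2t /msub upd_wa2 /Jhat -/J; ring.
rewrite /L2 (@trace_gram_rank_one _ _ _ _ _ _ _ rank_one) -/zeta_a !pow2_abs.
set T := mtrace _; set z := rowdot _ zeta_a.
have -> : / (la * gamma1) * (T - 2 * (la * J) * z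
      + (la * J) ^ 2 * (vnorm (gC S t) ^ 2 * vnorm (phia S t) ^ 2))
    - / (la * gamma1) * T
    = / gamma1 * (- 2 * J * z
      + la * J ^ 2 * vnorm (phia S t) ^ 2 * vnorm (gC S t) ^ 2)
  by field; lra.
apply: Rmult_le_compat_l; first by left; apply: Rinv_0_lt_compat.
have := cross_term_bound zeta_c s z; rewrite -J_split; lra.
Qed.
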